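(* Let $s,t$ be real numbers. Then $\det U_4^{(rc)} = 3s^2t^2$, $\det U_5^{(rc)} = s^4t + 4s^2t^3$, and for every $n \geq 6$, $$\det U_n^{(rc)} = t\,\det U_{n-1}^{(rc)} + s^2 \det U_{n-2}^{(rc)}.$$
   Context: For $n\ge 1$, $U_n=U_n(s,t)$ is the $n\times n$ upper Hessenberg matrix with subdiagonal entries $a_{i+1,i}=s$, $a_{ij}=0$ for $i>j+1$, $a_{ij}=t$ if $j\ge i$ and $j-i$ is even, and $a_{ij}=0$ if $j>i$ and $j-i$ is odd. For $n\ge 4$, let $X_n$ be the matrix obtained from $U_n$ by replacing the $(1,1)$ entry by $s$, the $(2,1)$ entry by $t$, the $(n,n-1)$ entry by $t$ and the $(n,n)$ entry by $s$. Let $P_n^{(r)}$ be the $n\times n$ identity matrix with its first two rows interchanged and $P_n^{(c)}$ the $n\times n$ identity matrix with its last two columns interchanged, and define $U_n^{(rc)} = P_n^{(r)} X_n P_n^{(c)}$ (an upper Hessenberg matrix with subdiagonal entries $s$ and upper triangular entries in $\{0,t\}$). *)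

From mathcomp Require Import all_boot all_order all_algebra.
From mathcomp Require Import Rstruct.
From Stdlib Require Import Rdefinitions.
Set Implicit Arguments. Unset Strict Implicit. Unset Printing Implicit Defensive.
Import GRing.Theory.
Local Open Scope ring_scope.

(* Indices are 0-based: entry (i,j) below corresponds to the paper's (i+1,j+1). *)

Definition Umx (R : pzRingType) (n : nat) (s t : R) : 'M[R]_n :=
  \matrix_(i < n, j < n)
    if (j.+1 == i :> nat) then s
    else if (leq i j) && ~~ odd ((j : nat) - (i : nat)) then t else 0.

Definition Xmx (R : pzRingType) (n : nat) (s t : R) : 'M[R]_n :=
  \matrix_(i < n, j < n)
    if ((i == 0%N :> nat) && (j == 0%N :> nat)) then s
    else if ((i == 1%N :> nat) && (j == 0%N :> nat)) then t
    else if ((i == n.-1 :> nat) && (j == n.-2 :> nat)) then t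
    else if ((i == n.-1 :> nat) && (j == n.-1 :> nat)) then s
    else Umx n s t i j.

(* Permutation matrices: identity with rows 1,2 swapped / columns n-1,n swapped. *)
Definition Prow (R : pzRingType) (n : nat) : 'M[R]_n :=
  \matrix_(i < n, j < n)
    (((if (i == 0%N :> nat) then 1%N else if (i == 1%N :> nat) then 0%N else (i : nat))
      == (j : nat))%:R).

Definition Pcol (R : pzRingType) (n : nat) : 'M[R]_n :=
  \matrix_(i < n, j < n)
    (((i : nat) ==
      (if (j == n.-2 :> nat) then n.-1 else if (j == n.-1 :> nat) then n.-2 else (j : nat)))%:R).

Definition Urc (R : pzRingType) (n : nat) (s t : R) : 'M[R]_n :=
  Prow R n *m Xmx n s t *m Pcol R n.

From mathcomp Require Import all_boot all_order all_algebra all_fingroup.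
From mathcomp Require Import Rstruct zify ring.
From Stdlib Require Import Rdefinitions.
Import GRing.Theory.
Local Open Scope ring_scope.

(* Swapping two rows and two columns leaves the determinant unchanged, so
   det U_n^(rc) = det X_n.  Subtracting from every column the column two places
   to its left (a unimodular operation) turns X_n into a matrix that is
   tridiagonal, with diagonal t, superdiagonal -s and subdiagonal s, except in
   its top-left corner and in its last row (0, ..., 0, t, s).  Above the last
   row these reduced matrices are truncations of a single infinite matrix Z,
   whose leading principal minors z_p obey the continuant recurrence
   z_(p+2) = t z_(p+1) + s^2 z_p for p >= 2.  Expanding along the last row gives
   det U_n^(rc) = s z_(n-1) + s t z_(n-2), which inherits the recurrence, and
   z_2 = s t, z_3 = 2 s t^2 yield the initial values. *)

(* [rewrite] iota-reduces the decided [if], so [do ![decide_if]] terminates. *)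
Ltac decide_if :=
  match goal with |- context [if ?c then _ else _] =>
    (rewrite (_ : c = true); last by lia) ||
    (rewrite (_ : c = false); last by lia) end.

Lemma bump_lt {h i : nat} : (i < h)%nat -> bump h i = i.
Proof. by move=> lt_ih; rewrite /bump leqNgt lt_ih. Qed.

Section NatIndexedMatrices.

Context {K : comPzRingType}.

Definition natmx n (f : nat -> nat -> K) : 'M[K]_n := \matrix_(i < n, j < n) f i j.

Lemma eq_natmx n (f g : nat -> nat -> K) :
  (forall i j, (i < n)%nat -> (j < n)%nat -> f i j = g i j) -> natmx n f = natmx n g.
Proof. by move=> eq_fg; apply/matrixP=> i j; rewrite !mxE eq_fg. Qed.

Lemma natmx_minor n (f : nat -> nat -> K) (i0 j0 : 'I_n.+1) :
  row' i0 (col' j0 (natmx n.+1 f)) = natmx n (fun i j => f (bump i0 i) (bump j0 j)).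
Proof. by apply/matrixP=> i j; rewrite !mxE. Qed.

Lemma natmx_minor_max n (f : nat -> nat -> K) :
  row' ord_max (col' ord_max (natmx n.+1 f)) = natmx n f.
Proof. by rewrite natmx_minor; apply: eq_natmx => i j lt_in lt_jn; rewrite !bump_lt. Qed.

Lemma det_natmx_lastcol k (f : nat -> nat -> K) :
  (forall i, (i < k)%nat -> f i k = 0) ->
  \det (natmx k.+1 f) = f k k * \det (natmx k f).
Proof.
move=> f_k0; rewrite (expand_det_col _ ord_max) big_ord_recr /= big1 ?add0r.
  by rewrite /cofactor natmx_minor_max mxE /= addnn -signr_odd odd_double mul1r.
by move=> i _; rewrite mxE /= f_k0 ?mul0r.
Qed.

Lemma det_natmx_continuant k (f : nat -> nat -> K) :
  (forall j, (j < k)%nat -> f k.+1 j = 0) -> (forall i, (i < k)%nat -> f i k.+1 = 0) ->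
  \det (natmx k.+2 f) =
    f k.+1 k.+1 * \det (natmx k.+1 f) - f k.+1 k * f k k.+1 * \det (natmx k f).
Proof.
move=> f_row0 f_col0.
rewrite (expand_det_row _ ord_max) !big_ord_recr /= big1 ?add0r; last first.
  by move=> j _; rewrite mxE /= f_row0 ?mul0r.
rewrite /cofactor !mxE /= natmx_minor_max natmx_minor det_natmx_lastcol; last first.
  by move=> i lt_ik; rewrite /= (bump_lt (leqW lt_ik)) /bump leqnn f_col0.
rewrite (@eq_natmx k _ f); last by move=> i j lt_ik lt_jk; rewrite /= !bump_lt //; apply: leqW.
rewrite /= bump_lt // /bump leqnn.
have -> : (-1) ^+ (k.+1 + k) = -1 :> K by rewrite -signr_odd addSn addnn /= odd_double.
have -> : (-1) ^+ (k.+1 + k.+1) = 1 :> K by rewrite -signr_odd addnn odd_double.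
ring.
Qed.

Lemma det_natmx3 (f : nat -> nat -> K) :
  \det (natmx 3 f) =
    f 0 0 * (f 1 1 * f 2 2 - f 1 2 * f 2 1) - f 0 1 * (f 1 0 * f 2 2 - f 1 2 * f 2 0)
    + f 0 2 * (f 1 0 * f 2 1 - f 1 1 * f 2 0).
Proof.
rewrite (expand_det_row _ ord0) !big_ord_recl big_ord0 /cofactor !natmx_minor.
rewrite !det_natmx_continuant // !det_mx11 !det_mx00 !mxE /=.
ring.
Qed.

Definition col_diff2 (f : nat -> nat -> K) i j : K :=
  f i j - (if (1 < j)%nat then f i (j - 2)%nat else 0).

Definition diff2_mx n := natmx n (fun i j => (i == j)%:R - (i.+2 == j)%:R).

Lemma mul_natmx_diff2 n (f : nat -> nat -> K) :
  natmx n f *m diff2_mx n = natmx n (col_diff2 f).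
Proof.
apply/matrixP=> i j; rewrite !mxE.
under eq_bigr do rewrite !mxE mulrBr.
rewrite sumrB (bigD1 j) //= eqxx mulr1 big1 ?addr0; last first.
  by move=> k ne_kj; rewrite val_eqE (negbTE ne_kj) mulr0.
rewrite /col_diff2; case: ltnP => [lt1j | le_j1].
  have lt_j2n : (j - 2 < n)%nat by rewrite (leq_ltn_trans (leq_subr 2 j)).
  rewrite (bigD1 (Ordinal lt_j2n)) //= big1 ?addr0.
    by rewrite /= (_ : (j - 2).+2 = j) ?eqxx ?mulr1 //; lia.
  move=> k ne_k; rewrite (_ : k.+2 == j = false) ?mulr0 //.
  by apply: contraNF ne_k => /eqP eq_kj; apply/eqP/val_inj => /=; lia.
by rewrite big1 ?subr0 // => k _; rewrite (_ : k.+2 == j = false) ?mulr0 //; lia.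
Qed.

Lemma det_diff2_mx n : \det (diff2_mx n) = 1.
Proof.
rewrite -det_tr det_trig; last first.
  apply/is_trig_mxP => i j lt_ij; rewrite !mxE.
  have [-> ->] : ((j : nat) == i) = false /\ (j.+2 == i) = false by lia.
  by rewrite subrr.
by apply: big1 => i _; rewrite !mxE eqxx (_ : i.+2 == i = false) ?subr0 //; lia.
Qed.

Lemma det_natmx_col_diff2 n (f : nat -> nat -> K) :
  \det (natmx n (col_diff2 f)) = \det (natmx n f).
Proof. by rewrite -mul_natmx_diff2 det_mulmx det_diff2_mx mulr1. Qed.

End NatIndexedMatrices.

Section UrcDeterminant.

Context {K : comPzRingType} (s t : K).

Lemma Prow_tperm n : Prow K n.+2 = tperm_mx 0 1.
Proof.
apply/matrixP=> i j; rewrite !mxE.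
case: tpermP => [->|->|/eqP ne_i0 /eqP ne_i1] //=.
rewrite ifN; last by apply: contra ne_i0 => /eqP eq_i0; apply/eqP/val_inj.
by rewrite ifN //; apply: contra ne_i1 => /eqP eq_i1; apply/eqP/val_inj.
Qed.

Lemma Pcol_tperm n : Pcol K n.+2 = tperm_mx (inord n) ord_max.
Proof.
apply/matrixP=> i j; rewrite !mxE.
have swap_eq : (tperm (inord n) ord_max i == j) = (i == tperm (inord n) ord_max j).
  by apply/eqP/eqP => [<-|->]; rewrite tpermK.
rewrite swap_eq /=.
case: (tpermP (inord n : 'I_n.+2) ord_max j) => [->|->|/eqP ne_jn /eqP ne_jmax] /=.
- by rewrite inordK // eqxx.
- by rewrite eqxx ifN //= ?neq_ltn ?ltnSn ?orbT // -val_eqE /= inordK.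
rewrite ifN; last by apply: contra ne_jn => /eqP eq_jn; apply/eqP/val_inj; rewrite /= inordK.
by rewrite ifN //; apply: contra ne_jmax => /eqP eq_jmax; apply/eqP/val_inj.
Qed.

Lemma det_Urc n : \det (Urc n.+2 s t) = \det (Xmx n.+2 s t).
Proof.
rewrite /Urc !det_mulmx Prow_tperm Pcol_tperm !det_perm !odd_tperm /=.
have -> : (inord n : 'I_n.+2) != ord_max by rewrite -val_eqE /= inordK // neq_ltn ltnSn.
by rewrite /= mulNr mul1r mulrN mulr1 opprK.
Qed.

Definition u_coef i j : K :=
  if j.+1 == i then s else if (i <= j)%nat && ~~ odd (j - i) then t else 0.

Definition x_coef n i j : K :=
  if (i == 0%nat) && (j == 0%nat) then s
  else if (i == 1%nat) && (j == 0%nat) then t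
  else if (i == n.-1) && (j == n.-2) then t
  else if (i == n.-1) && (j == n.-1) then s
  else u_coef i j.

(* X_n without its last-row corrections; it agrees with X_n on rows 0 .. n-2 for every n. *)
Definition y_coef i j : K :=
  if (i == 0%nat) && (j == 0%nat) then s
  else if (i == 1%nat) && (j == 0%nat) then t
  else u_coef i j.

Definition tri_coef i j : K :=
  if j == i then t else if j == i.+1 then - s else if j.+1 == i then s else 0.

Definition z_coef := col_diff2 y_coef.

Definition zminor p := \det (natmx p z_coef).

Lemma Xmx_natmx n : Xmx n s t = natmx n (x_coef n).
Proof. by apply/matrixP => i j; rewrite !mxE. Qed.

Lemma col_diff2_u_coef i j : (1 < j)%nat -> col_diff2 u_coef i j = tri_coef i j.
Proof.
move=> lt1j; rewrite /col_diff2 /u_coef /tri_coef lt1j.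
case: (ltnP j.+1 i) => [lt_ji | le_ij1].
  by do ![decide_if]; rewrite subrr.
case: (ltnP i (j - 2)) => [lt_ij2 | le_j2i].
  rewrite (_ : odd (j - 2 - i) = odd (j - i)); last by lia.
  by case: odd => /=; rewrite ?andbF ?andbT; do ![decide_if]; rewrite subrr.
have : i = j.+1 \/ i = j \/ i = (j - 1)%nat \/ i = (j - 2)%nat by lia.
by case=> [|[|[|]]] ->; do ![decide_if]; rewrite ?subr0 ?sub0r ?subrr.
Qed.

Lemma z_coef_tri i j : (1 < j)%nat -> ((1 < i) || (2 < j))%nat -> z_coef i j = tri_coef i j.
Proof.
move=> lt1j off_corner; rewrite -col_diff2_u_coef // /z_coef /col_diff2 /y_coef.
by do ![decide_if].
Qed.

Lemma z_coef_lower i j : (j.+1 < i)%nat -> z_coef i j = 0.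
Proof.
move=> lt_j1i; rewrite /z_coef /col_diff2 /y_coef /u_coef.
by do ![decide_if]; rewrite ?if_same ?subrr ?subr0.
Qed.

Lemma zminor_rec k : (1 < k)%nat -> zminor k.+2 = t * zminor k.+1 + s ^+ 2 * zminor k.
Proof.
move=> lt1k; rewrite /zminor det_natmx_continuant; last 2 first.
- by move=> j lt_jk; rewrite z_coef_lower.
- by move=> i lt_ik; rewrite z_coef_tri /tri_coef; [do ![decide_if] | lia..].
rewrite !z_coef_tri /tri_coef; [do ![decide_if]; ring | lia..].
Qed.

Lemma zminor2 : zminor 2 = s * t.
Proof.
rewrite /zminor det_natmx_continuant // det_mx11 det_mx00 !mxE.
by rewrite /z_coef /col_diff2 /y_coef /u_coef /=; ring.
Qed.

Lemma zminor3 : zminor 3 = 2%:R * s * t ^+ 2.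
Proof. by rewrite /zminor det_natmx3 /z_coef /col_diff2 /y_coef /u_coef /=; ring. Qed.

Lemma col_diff2_x_coef_head k i j :
  (i <= k)%nat -> col_diff2 (x_coef k.+2) i j = z_coef i j.
Proof.
move=> le_ik; rewrite /z_coef /col_diff2 /x_coef /y_coef /=.
have -> : (i == k.+1) = false by lia.
by rewrite !andFb.
Qed.

Lemma col_diff2_x_coef_last k j : (1 < k)%nat -> (j <= k.+1)%nat ->
  col_diff2 (x_coef k.+2) k.+1 j = if j == k then t else if j == k.+1 then s else 0.
Proof.
move=> lt1k le_jk1; rewrite /col_diff2 /x_coef /u_coef /=.
have : (j < k \/ j = k \/ j = k.+1)%nat by lia.
by case=> [lt_jk | [-> | ->]]; do ![decide_if]; rewrite ?if_same ?subr0 ?subrr.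
Qed.

Lemma det_Urc_zminor k : (1 < k)%nat ->
  \det (Urc k.+2 s t) = s * zminor k.+1 + s * t * zminor k.
Proof.
move=> lt1k.
have lead_z m : (m <= k.+1)%nat -> natmx m (col_diff2 (x_coef k.+2)) = natmx m z_coef.
  by move=> le_mk; apply: eq_natmx => i j lt_im _; rewrite col_diff2_x_coef_head //; lia.
rewrite det_Urc Xmx_natmx -det_natmx_col_diff2 det_natmx_continuant; last 2 first.
- by move=> j lt_jk; rewrite col_diff2_x_coef_last; [do ![decide_if] | lia..].
- by move=> i lt_ik; rewrite col_diff2_x_coef_head ?z_coef_tri /tri_coef;
    [do ![decide_if] | lia..].
rewrite !col_diff2_x_coef_last ?leqnSn // col_diff2_x_coef_head //.
rewrite /zminor !lead_z // z_coef_tri /tri_coef; [do ![decide_if]; ring | lia..].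
Qed.

End UrcDeterminant.

Theorem proposition4p3 (s t : R) :
  \det (Urc 4 s t) = 3%:R * s ^+ 2 * t ^+ 2 /\
  \det (Urc 5 s t) = s ^+ 4 * t + 4%:R * s ^+ 2 * t ^+ 3 /\
  (forall n : nat, leq 6 n ->
     \det (Urc n s t) = t * \det (Urc n.-1 s t) + s ^+ 2 * \det (Urc n.-2 s t)).
Proof.
split; first by rewrite det_Urc_zminor // zminor3 zminor2; ring.
split; first by rewrite det_Urc_zminor // zminor_rec // zminor3 zminor2; ring.
move=> n le6n; have [k -> lt1k] : exists2 k, n = k.+4 & (1 < k)%nat by exists (n - 4)%nat; lia.
by rewrite /= !det_Urc_zminor ?zminor_rec; [ring | lia..].
Qed.
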